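(* Let $X$ be a Banach space with two closed linear subspaces $N,N'$, and let $V$ be a linear subspace of $N$ with $n:=\dim V$ a positive integer. Assume $\delta(N,N')<\frac{1}{2^{n-1}n}$. Then for each $\varepsilon\in\big(0,\frac{1}{2^{n-1}n}-\delta(N,N')\big)$ there is a linear subspace $V'$ of $N'$ with $\dim V'=n$ and $$\hat\delta(V,V')\le\frac{2^{n-1}n(\delta(N,N')+\varepsilon)}{1-2^{n-1}n(\delta(N,N')+\varepsilon)}.$$
   Context: For linear subspaces $A,B$: $\delta(A,B):=\sup_{u\in A,\|u\|=1}\operatorname{dist}(u,B)$ ($0$ if $A=\{0\}$), and $\hat\delta(A,B):=\max\{\delta(A,B),\delta(B,A)\}$. *)

From HB Require Import structures.
From mathcomp Require Import all_boot all_order all_algebra.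
From mathcomp Require Import all_classical all_reals all_analysis.
Set Implicit Arguments. Unset Strict Implicit. Unset Printing Implicit Defensive.
Import Order.TTheory GRing.Theory Num.Theory.
Import numFieldNormedType.Exports.
Local Open Scope classical_set_scope.
Local Open Scope ring_scope.

Section Gap.
Variables (R : realType) (X : normedModType R).

Definition lin_subspace (A : set X) : Prop :=
  A 0 /\ (forall u v, A u -> A v -> A (u + v)) /\ (forall (a : R) u, A u -> A (a *: u)).

Definition span_fam (n : nat) (b : 'I_n -> X) : set X :=
  [set x | exists c : 'I_n -> R, x = \sum_(i < n) c i *: b i].

Definition lin_indep (n : nat) (b : 'I_n -> X) : Prop :=
  forall c : 'I_n -> R, \sum_(i < n) c i *: b i = 0 -> forall i, c i = 0.

Definition has_dim (A : set X) (n : nat) : Prop :=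
  exists b : 'I_n -> X, lin_indep b /\ A = span_fam b.

Definition dist (u : X) (B : set X) : R := inf [set `|u - b| | b in B].

Definition gap (A B : set X) : R :=
  if `[< A = [set 0] >] then 0
  else sup [set dist u B | u in [set u | A u /\ `|u| = 1]].

Definition gap_hat (A B : set X) : R := Num.max (gap A B) (gap B A).

End Gap.

From HB Require Import structures.
From mathcomp Require Import all_boot all_order all_algebra.
From mathcomp Require Import all_classical all_reals all_analysis.
From mathcomp Require Import ring lra.
Set Implicit Arguments. Unset Strict Implicit. Unset Printing Implicit Defensive.
Import Order.TTheory GRing.Theory Num.Theory.
Import numFieldNormedType.Exports.
Local Open Scope classical_set_scope.
Local Open Scope ring_scope.

(* The key is a basis e of V made of unit vectors with
   sum_i |a_i| <= 2^(n-1) n |sum_i a_i e_i|.  It is built one vector at a time: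
   the new vector is the normalised difference between the next basis vector
   and its nearest point in the span of the previous ones, so the new
   coefficient is at most the norm of the combination and the old part at most
   twice that norm, which turns a constant C into 2 C + 1 <= 2^n (n + 1).
   Since dist(e_i, N') <= delta(N, N'), each e_i has a partner e'_i in N' with
   |e_i - e'_i| < delta(N, N') + eps, and the coefficient bound turns these
   componentwise estimates into the gap estimate between V and span(e'). *)

Definition extend_last T n (f : 'I_n -> T) (x : T) : 'I_n.+1 -> T :=
  fun i => if unlift ord_max i is Some j then f j else x.

Lemma lift_ord_max_widen n (j : 'I_n) : lift ord_max j = widen_ord (leqnSn n) j.
Proof. exact/val_inj/lift_max. Qed.

Lemma extend_last_widen T n (f : 'I_n -> T) x j :
  extend_last f x (widen_ord (leqnSn n) j) = f j.
Proof. by rewrite /extend_last -lift_ord_max_widen liftK. Qed.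

Lemma extend_last_max T n (f : 'I_n -> T) x : extend_last f x ord_max = x.
Proof. by rewrite /extend_last unlift_none. Qed.

Lemma extend_last_restrict T n (f : 'I_n.+1 -> T) :
  extend_last (fun j => f (widen_ord (leqnSn n) j)) (f ord_max) = f.
Proof.
apply/funext => i; rewrite /extend_last.
by case: unliftP => [j ->|->] //; rewrite lift_ord_max_widen.
Qed.

Definition basis_const (R : pzSemiRingType) n : R := 2 ^+ n.-1 * n%:R.

Lemma basis_const_ge0 (R : realDomainType) n : 0 <= basis_const R n.
Proof. by rewrite mulr_ge0 ?exprn_ge0. Qed.

Lemma basis_constS (R : realDomainType) n :
  2 * basis_const R n + 1 <= basis_const R n.+1.
Proof.
rewrite /basis_const; case: n => [|m]; first by rewrite !mulr0 add0r expr0 mul1r.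
have p1 : 1 <= 2 ^+ m :> R by rewrite exprn_ege1 // ler1n.
rewrite /= exprS -[m.+2]addn2 -[m.+1]addn1 !natrD.
have : 0 <= m%:R :> R by [].
by move: p1; set p := 2 ^+ m; set q := m%:R; nra.
Qed.

Section Distance.
Variables (R : realType) (X : normedModType R).

Lemma dist_le_norm (u w : X) (B : set X) : B w -> dist u B <= `|u - w|.
Proof.
move=> Bw; apply: ge_inf; last by exists w.
by exists 0 => _ [b _ <-].
Qed.

Lemma dist_lt_exists (u : X) (B : set X) t : B !=set0 -> dist u B < t ->
  exists2 w, B w & `|u - w| < t.
Proof.
move=> [w0 Bw0] ht.
have hinf : has_inf [set `|u - b| | b in B].
  by split; [exists `|u - w0|, w0 | exists 0 => _ [b _ <-]].
have e0 : 0 < t - dist u B by rewrite subr_gt0.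
have [_ [w Bw <-] hw] := inf_adherent e0 hinf.
by exists w => //; move: hw; rewrite /dist addrCA subrr addr0.
Qed.

Lemma gap_le (A B : set X) r : 0 <= r ->
  (forall u, A u -> `|u| = 1 -> dist u B <= r) -> gap A B <= r.
Proof.
move=> r0 dist_le; rewrite /gap; case: ifPn => // _.
set E := [set dist u B | u in _].
have [[x Ex]|E0] := pselect (E !=set0).
  by apply: ge_sup; [exists x | move=> _ [u [Au nu] <-]; exact: dist_le].
rewrite (_ : E = set0) ?sup0 //; apply/seteqP; split => x // Ex.
by apply: E0; exists x.
Qed.

Lemma dist_le_gap (A B : set X) u : B 0 -> A u -> `|u| = 1 ->
  dist u B <= gap A B.
Proof.
move=> B0 Au nu; rewrite /gap; case: ifPn => [/asboolP HA|_].
  by move: Au nu; rewrite HA => ->; rewrite normr0 => /eqP; rewrite eq_sym oner_eq0.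
apply: ub_le_sup; last by exists u.
exists 1 => _ [v [_ nv] <-].
by apply: le_trans (dist_le_norm v B0) _; rewrite subr0 nv.
Qed.

Lemma exists_close_of_gap (A B : set X) u r : B 0 -> A u -> `|u| = 1 ->
  gap A B < r -> exists2 w, B w & `|u - w| < r.
Proof.
move=> B0 Au nu hr; apply: dist_lt_exists; first by exists 0.
exact: le_lt_trans (dist_le_gap B0 Au nu) hr.
Qed.

End Distance.

Section Span.
Variables (R : realType) (X : normedModType R).

Lemma span_fam_sub n (b : 'I_n -> X) (A : set X) : lin_subspace A ->
  (forall i, A (b i)) -> span_fam b `<=` A.
Proof.
move=> [A0 [AD AZ]] Hb x [c ->]; elim/big_ind: _ => //.
by move=> i _; apply: AZ.
Qed.

Lemma span_fam_subspace n (b : 'I_n -> X) : lin_subspace (span_fam b).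
Proof.
split; first by exists (fun _ => 0); rewrite big1 // => i _; rewrite scale0r.
split.
  move=> u v [c ->] [d ->]; exists (fun i => c i + d i).
  by rewrite -big_split; apply: eq_bigr => i _; rewrite scalerDl.
move=> a u [c ->]; exists (fun i => a * c i).
by rewrite scaler_sumr; apply: eq_bigr => i _; rewrite scalerA.
Qed.

Lemma span_fam_mem n (b : 'I_n -> X) i : span_fam b (b i).
Proof.
exists (fun j => (j == i)%:R); rewrite (bigD1 i) //= eqxx scale1r big1 ?addr0 //.
by move=> j /negbTE ->; rewrite scale0r.
Qed.

Lemma sum_scale_extend_last n (c : 'I_n.+1 -> R) (e : 'I_n -> X) x :
  \sum_i c i *: extend_last e x i =
  \sum_(j < n) c (widen_ord (leqnSn n) j) *: e j + c ord_max *: x.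
Proof.
rewrite big_ord_recr /= extend_last_max.
by under eq_bigr do rewrite extend_last_widen.
Qed.

Lemma span_fam_extend_last n (e : 'I_n -> X) x v :
  span_fam (extend_last e x) v <-> exists w t, span_fam e w /\ v = w + t *: x.
Proof.
split.
  move=> [c ->]; rewrite sum_scale_extend_last.
  by do 2 eexists; split; first by eexists.
move=> [_ [t [[c ->] ->]]]; exists (extend_last c t).
rewrite sum_scale_extend_last extend_last_max; congr (_ + _).
by apply: eq_bigr => j _; rewrite extend_last_widen.
Qed.

Lemma span_fam_extend_last_congr n (e f : 'I_n -> X) x :
  span_fam e = span_fam f -> span_fam (extend_last e x) = span_fam (extend_last f x).
Proof.
move=> ef; apply/seteqP; split => v /span_fam_extend_last [w [t [ew ->]]];
  apply/span_fam_extend_last; exists w, t; split => //.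
  by rewrite -ef.
by rewrite ef.
Qed.

Lemma span_fam_extend_last_shift n (e : 'I_n -> X) w a y :
  span_fam e w -> a != 0 ->
  span_fam (extend_last e (a *: (y - w))) = span_fam (extend_last e y).
Proof.
move=> ew a0; have [_ [eD eZ]] := span_fam_subspace e.
apply/seteqP; split => v /span_fam_extend_last [u [t [eu ->]]];
  apply/span_fam_extend_last.
  exists (u + (- (t * a)) *: w), (t * a); split; first by apply: eD => //; apply: eZ.
  by rewrite scalerA scalerBr scaleNr addrA addrAC.
exists (u + t *: w), (t / a); split; first by apply: eD => //; apply: eZ.
by rewrite scalerA mulfVK // scalerBr addrA addrAC addrK.
Qed.

Lemma lin_indep_widen n (b : 'I_n.+1 -> X) :
  lin_indep b -> lin_indep (fun j => b (widen_ord (leqnSn n) j)).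
Proof.
move=> bi c hc j; rewrite -(extend_last_widen c 0 j); apply: bi.
rewrite big_ord_recr /= extend_last_max scale0r addr0; apply: etrans hc.
by apply: eq_bigr => i _; rewrite extend_last_widen.
Qed.

Lemma lin_indep_last_notin_span n (b : 'I_n.+1 -> X) :
  lin_indep b -> ~ span_fam (fun j => b (widen_ord (leqnSn n) j)) (b ord_max).
Proof.
move=> bi [c hc]; have : extend_last c (-1) ord_max = 0.
  apply: bi; rewrite big_ord_recr /= extend_last_max scaleN1r hc.
  under eq_bigr do rewrite extend_last_widen.
  exact: subrr.
by rewrite extend_last_max => /eqP; rewrite oppr_eq0 oner_eq0.
Qed.

End Span.

Section CoefBound.
Variables (R : realType) (X : normedModType R).

Definition coef_bounded n (e : 'I_n -> X) (K : R) : Prop :=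
  forall c : 'I_n -> R, \sum_i `|c i| <= K * `|\sum_i c i *: e i|.

Lemma coef_bounded_le n (e : 'I_n -> X) K K' :
  K <= K' -> coef_bounded e K -> coef_bounded e K'.
Proof. by move=> KK' eK c; apply: le_trans (eK c) _; rewrite ler_wpM2r. Qed.

Lemma coef_bounded_far n (e : 'I_n -> X) K y (c : 'I_n -> R) i :
  0 <= K -> coef_bounded e K -> 2 * K * `|y| < `|c i| ->
  `|y| <= `|y - \sum_i c i *: e i|.
Proof.
move=> K0 eK hi; set s := \sum_i _ *: _.
have ci_le : `|c i| <= K * `|s|.
  by apply: le_trans (eK c); rewrite (bigD1 i) //= lerDl sumr_ge0.
have s_gt : 2 * `|y| < `|s| by nra.
have : `|s| <= `|y| + `|y - s|.
  by rewrite -{1}(subKr y s); exact: ler_normB.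
lra.
Qed.

(* Minimise the distance to y over the compact box of coefficients bounded by
   2 K |y|; coefficients outside the box give points farther from y than 0. *)
Lemma exists_nearest_in_span n (e : 'I_n -> X) K y :
  0 <= K -> coef_bounded e K ->
  exists2 w0, span_fam e w0 & forall w, span_fam e w -> `|y - w0| <= `|y - w|.
Proof.
move=> K0 eK; pose r := 2 * K * `|y|.
have r0 : 0 <= r by rewrite !mulr_ge0.
pose L (a : 'rV[R]_n) := \sum_i a ord0 i *: e i.
pose A := [set a : 'rV[R]_n | forall i, `[- r, r]%classic (a ord0 i)].
have cA : compact A.
  exact: (@rV_compact _ _ (fun _ => `[- r, r]%classic)
            (fun _ => @segment_compact R (- r) r)).
have A0 : A 0 by move=> i /=; rewrite mxE in_itv /= oppr_le0 r0.
have cL : continuous L.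
  apply: (@continuous_big X _ _ 0 xpredT add_continuous _ _
            (fun i (a : 'rV[R]_n) => a ord0 i *: e i)) => i _ a.
  by apply: continuousZr_tmp; exact: coord_continuous.
have cg : continuous (fun a => `|y - L a|).
  move=> a; apply: (@continuous_comp _ _ _ (fun a => y - L a) (@Num.norm _ X)).
    by apply: continuousB; [exact: cst_continuous | exact: cL].
  exact: norm_continuous.
have [a0 _ ha0] := compact_EVT_min (ex_intro _ 0 A0) cA (continuous_subspaceT cg).
have L0 : L 0 = 0 by rewrite /L big1 // => j _; rewrite mxE scale0r.
exists (L a0); first by exists (fun i => a0 ord0 i).
move=> _ [c ->]; pose t := \row_i c i : 'rV[R]_n.
have Lt : L t = \sum_i c i *: e i by apply: eq_bigr => i _; rewrite mxE.
have [tA|tA] := pselect (A t); first by rewrite -Lt; apply: ha0; rewrite inE.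
have [i hi] : exists i, r < `|c i|.
  apply: contrapT => hn; apply: tA => i /=; rewrite mxE in_itv /= -ler_norml.
  by rewrite leNgt; apply/negP => h; apply: hn; exists i.
apply: le_trans (coef_bounded_far K0 eK hi).
by have := ha0 0; rewrite inE /= L0 subr0; apply.
Qed.

Section ExtendByNearest.
Variables (n : nat) (e : 'I_n -> X) (y w0 : X).
Hypotheses (e_w0 : span_fam e w0) (y_w0_gt0 : 0 < `|y - w0|)
  (w0_nearest : forall w, span_fam e w -> `|y - w0| <= `|y - w|).

Local Notation x := (`|y - w0|^-1 *: (y - w0)).

Lemma norm_unit_nearest : `|x| = 1.
Proof. by rewrite normrZ ger0_norm ?invr_ge0 ?ltW // mulVf ?gt_eqF. Qed.

Lemma coef_le_norm_nearest u a : span_fam e u -> `|a| <= `|u + a *: x|.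
Proof.
move=> eu; have [->|a0] := eqVneq a 0; first by rewrite normr0.
have [_ [eD eZ]] := span_fam_subspace e.
set d := `|y - w0|.
have : d <= `|y - (w0 - (d / a) *: u)|.
  by apply: w0_nearest; apply: eD => //; rewrite -scaleN1r scalerA; exact: eZ.
have -> : y - (w0 - (d / a) *: u) = (d / a) *: (u + a *: x).
  rewrite scalerDr !scalerA (_ : d / a * a / d = 1); last first.
    by field; rewrite a0 gt_eqF.
  by rewrite scale1r opprB addrCA.
rewrite normrZ normf_div (ger0_norm (ltW y_w0_gt0)) mulrAC.
by rewrite ler_pdivlMr ?normr_gt0 // ler_pM2l.
Qed.

Lemma coef_bounded_extend_nearest K : 0 <= K -> coef_bounded e K ->
  coef_bounded (extend_last e x) (2 * K + 1).
Proof.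
move=> K0 eK c; rewrite sum_scale_extend_last big_ord_recr /=.
set u := \sum_(j < n) _ *: _; set a := c ord_max; set v := u + a *: x.
have eu : span_fam e u by eexists.
have a_le := coef_le_norm_nearest a eu.
have u_le : `|u| <= 2 * `|v|.
  have {1}-> : u = v - a *: x by rewrite addrK.
  by apply: le_trans (ler_normB _ _) _; rewrite normrZ norm_unit_nearest mulr1; lra.
have := eK (fun j => c (widen_ord (leqnSn n) j)); rewrite -/u.
have := normr_ge0 v; nra.
Qed.

End ExtendByNearest.

Lemma exists_unit_basis n (b : 'I_n -> X) : lin_indep b -> exists e : 'I_n -> X,
  [/\ forall i, `|e i| = 1, span_fam e = span_fam b & coef_bounded e (basis_const R n)].
Proof.
elim: n b => [|n IH] b bi.
  exists b; split => //; first by case.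
  by move=> c; rewrite !big_ord0 /basis_const mulr0 mul0r.
set b' := fun j => b (widen_ord (leqnSn n) j).
have [e' [e'1 e'b' e'K]] := IH b' (lin_indep_widen bi).
have K0 := basis_const_ge0 R n.
have [w0 e'w0 w0_nearest] := exists_nearest_in_span (b ord_max) K0 e'K.
have d0 : 0 < `|b ord_max - w0|.
  rewrite normr_gt0 subr_eq0; apply/negP => /eqP bw0.
  by apply: (lin_indep_last_notin_span bi); rewrite -/b' -e'b' bw0.
exists (extend_last e' (`|b ord_max - w0|^-1 *: (b ord_max - w0))); split.
- move=> i; rewrite /extend_last; case: unlift => [j|]; first exact: e'1.
  exact: norm_unit_nearest d0.
- rewrite span_fam_extend_last_shift ?invr_eq0 ?gt_eqF //.
  by rewrite -[in RHS](extend_last_restrict b); apply: span_fam_extend_last_congr.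
- apply: coef_bounded_le (basis_constS R n) _.
  exact: coef_bounded_extend_nearest.
Qed.

End CoefBound.

Section Perturbation.
Variables (R : realType) (X : normedModType R).
Variables (n : nat) (e e' : 'I_n -> X) (K th : R).
Hypotheses (K0 : 0 <= K) (th0 : 0 <= th) (Kth_lt1 : K * th < 1)
  (eK : coef_bounded e K) (e_e' : forall i, `|e i - e' i| <= th).

Lemma norm_sum_perturb_le a :
  `|\sum_i a i *: e i - \sum_i a i *: e' i| <= K * th * `|\sum_i a i *: e i|.
Proof.
rewrite -sumrB; apply: le_trans (ler_norm_sum _ _ _) _.
apply: (@le_trans _ _ (\sum_i `|a i| * th)).
  by apply: ler_sum => i _; rewrite -scalerBr normrZ ler_wpM2l.
by rewrite -mulr_suml mulrAC ler_wpM2r ?eK.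
Qed.

Lemma lin_indep_perturb : lin_indep e'.
Proof.
move=> a ha i; have s_le := norm_sum_perturb_le a; rewrite ha subr0 in s_le.
have s0 : `|\sum_i a i *: e i| = 0.
  apply/eqP; rewrite eq_le normr_ge0 andbT; move: s_le.
  by rewrite -subr_ge0 -[X in _ - X]mul1r -mulrBl nmulr_rge0 // subr_lt0.
have := eK a; rewrite s0 mulr0 => a_le.
apply/normr0_eq0/eqP; rewrite eq_le normr_ge0 andbT.
by apply: le_trans a_le; rewrite (bigD1 i) //= lerDl sumr_ge0.
Qed.

Lemma gap_hat_span_perturb_le :
  gap_hat (span_fam e) (span_fam e') <= K * th / (1 - K * th).
Proof.
have Kth0 : 0 <= K * th by rewrite mulr_ge0.
have B0 : 0 <= K * th / (1 - K * th) by rewrite divr_ge0 // subr_ge0 ltW.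
rewrite /gap_hat ge_max; apply/andP; split; apply: gap_le => // _ [a ->] nu.
- have ea : span_fam e' (\sum_i a i *: e' i) by exists a.
  apply: le_trans (dist_le_norm _ ea) _.
  apply: le_trans (norm_sum_perturb_le a) _; rewrite nu mulr1.
  by rewrite ler_pdivlMr ?subr_gt0 //; apply: ler_piMr; rewrite ?gerBl.
- have ea : span_fam e (\sum_i a i *: e i) by exists a.
  apply: le_trans (dist_le_norm _ ea) _; rewrite distrC.
  have z_le := norm_sum_perturb_le a.
  have v_le : `|\sum_i a i *: e i| <=
      1 + `|\sum_i a i *: e i - \sum_i a i *: e' i|.
    rewrite -nu -{1}(subrK (\sum_i a i *: e' i) (\sum_i a i *: e i)) addrC.
    exact: ler_normD.
  apply: le_trans (z_le) _; rewrite ler_pdivlMr ?subr_gt0 // -[K * th * _ * _]mulrA.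
  by apply: ler_piMr => //; rewrite mulrBr mulr1 mulrC; lra.
Qed.

End Perturbation.

Theorem lemma2p10 (R : realType) (X : completeNormedModType R)
  (N N' V : set X) (n : nat) :
  lin_subspace N -> closed N ->
  lin_subspace N' -> closed N' ->
  lin_subspace V -> V `<=` N -> has_dim V n -> (0 < n)%N ->
  gap N N' < 1 / (2 ^+ n.-1 * n%:R) ->
  forall eps : R, 0 < eps -> eps < 1 / (2 ^+ n.-1 * n%:R) - gap N N' ->
  exists V' : set X,
    [/\ lin_subspace V', V' `<=` N', has_dim V' n &
      gap_hat V V' <=
        (2 ^+ n.-1 * n%:R) * (gap N N' + eps) /
          (1 - (2 ^+ n.-1 * n%:R) * (gap N N' + eps))].
Proof.
move=> _ _ sN' _ _ VN [b [bi Vb]] n0 _ eps eps0 heps; subst V.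
have [e [e1 eb eK]] := exists_unit_basis bi.
rewrite -eb in VN *; rewrite -/(basis_const R n) in heps *.
set th := gap N N' + eps.
have close i : exists w, N' w /\ `|e i - w| < th.
  have [w N'w ew] := exists_close_of_gap sN'.1 (VN _ (span_fam_mem e i)) (e1 i)
    (ltr_pwDr eps0 (lexx _)).
  by exists w.
have [e' e'_close] := choice close.
have th0 : 0 <= th := le_trans (normr_ge0 _) (ltW (e'_close (Ordinal n0)).2).
have Kth_lt1 : basis_const R n * th < 1.
  have C0 : 0 < basis_const R n by rewrite mulr_gt0 ?exprn_gt0 // ltr0n.
  by move: heps; rewrite ltrBrDl -/th ltr_pdivlMr // mulrC.
have e_e' i : `|e i - e' i| <= th by exact: ltW (e'_close i).2.
have K0 := basis_const_ge0 R n.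
exists (span_fam e'); split.
- exact: span_fam_subspace.
- by apply: span_fam_sub => // i; exact: (e'_close i).1.
- by exists e'; split => //; exact: lin_indep_perturb th0 Kth_lt1 eK e_e'.
- exact: gap_hat_span_perturb_le K0 th0 Kth_lt1 eK e_e'.
Qed.
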